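(* Let $n\ge 1$, let $G\in\mathcal{G}_{2n}$, and let $M_s$ be a perfect matching of $G$ with $f(G,M_s)=n-1$. Then for every perfect matching $M$ of $G$, $M_s$ can be obtained from $M$ by a finite sequence of matching 2-switches (possibly empty).
   Context: All graphs are finite and simple. $\mathcal{G}_{2n}$ denotes the set of all graphs with $2n$ vertices that have a perfect matching. For a perfect matching $M$ of $G$, a forcing set of $M$ is a subset $S\subseteq M$ contained in no other perfect matching of $G$; $f(G,M)$ is the minimum size of a forcing set of $M$. A cycle is $M$-alternating if its edges alternate between $M$ and $E(G)\setminus M$. If $C$ is an $M$-alternating cycle of length $4$, the perfect matching $M\oplus E(C)=(M\setminus E(C))\cup(E(C)\setminus M)$ is said to be obtained from $M$ by a matching 2-switch. *)

From mathcomp Require Import all_boot.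
From Stdlib Require Import Relation_Operators.
Set Implicit Arguments. Unset Strict Implicit. Unset Printing Implicit Defensive.

(* A finite simple graph: vertex type T (finType), adjacency e : rel T,
   assumed symmetric and irreflexive in the theorem.  Edges are the
   2-element vertex sets {x,y} with e x y. *)
Section Matchings.
Variables (T : finType) (e : rel T).

Definition is_edge (S : {set T}) : bool :=
  [exists x, exists y, e x y && (S == [set x; y])].

Definition perfect_matching (M : {set {set T}}) : bool :=
  [forall S in M, is_edge S] &&
  [forall v, #|[set S in M | v \in S]| == 1].

Definition forcing_setb (M S : {set {set T}}) : bool :=
  (S \subset M) &&
  [forall M' : {set {set T}}, (perfect_matching M' && (S \subset M')) ==> (M' == M)].

(* f(G,M): minimum size of a forcing set of M (M itself is a forcing set). *)
Definition forcing_number (M : {set {set T}}) : nat :=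
  \big[minn/#|M|]_(S in powerset M | forcing_setb M S) #|S|.

Definition two_switch (M M' : {set {set T}}) : Prop :=
  exists a b c d : T,
    [/\ uniq [:: a; b; c; d],
        e a b && e b c && e c d && e d a,
        ([set a; b] \in M) && ([set c; d] \in M),
        ([set b; c] \notin M) && ([set d; a] \notin M) &
        M' = ((M :\ [set a; b]) :\ [set c; d]) :|: [set [set b; c]; [set d; a]]].

End Matchings.

(* Perfect matchings are handled through their mate functions: [mate M] is a
   fixed-point-free involution along edges, and it determines M.  The 2-switch
   of M along an alternating 4-cycle a b c d (b = mate a, d = mate c) has as
   mate function the conjugate of [mate M] by the transposition (a c).

   Any two edges of Ms span an
   Ms-alternating 4-cycle: otherwise Ms minus these two edges would be a
   forcing set of size n - 2.
   Step 2 ([progress_from]).  If M differs from Ms at y0, follow the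
   M/Ms-alternating cycle y0 x1 y1 x2 ... through y0.  Applying Step 1 to pairs
   among its first five Ms-edges, a case analysis finds one or two 2-switches
   that make M agree with Ms on more vertices without losing any agreement.  Induction on the number of disagreeing vertices. *)

From mathcomp Require Import all_boot order perm.
From Stdlib Require Import Relation_Operators.
Set Implicit Arguments. Unset Strict Implicit. Unset Printing Implicit Defensive.
Import Order.TTheory.

Section Graph.
Variables (T : finType) (e : rel T).
Hypothesis e_sym : symmetric e.
Hypothesis e_irr : irreflexive e.

Local Notation reaches := (clos_refl_trans _ (two_switch e)).

Lemma pm_edge M S : perfect_matching e M -> S \in M ->
  exists x y, e x y /\ S = [set x; y].
Proof.
case/andP=> /forallP /(_ S) + _ SM; rewrite SM /=.
by case/existsP=> x /existsP [y /andP [exy /eqP ->]]; exists x, y.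
Qed.

Lemma pm_cover M v : perfect_matching e M -> exists2 S, S \in M & v \in S.
Proof.
case/andP=> _ /forallP /(_ v) /cards1P [S0 HS0].
have : S0 \in [set S in M | v \in S] by rewrite HS0 set11.
by rewrite inE => /andP [S0M vS0]; exists S0.
Qed.

Lemma pm_uniq M v S1 S2 : perfect_matching e M -> S1 \in M -> S2 \in M ->
  v \in S1 -> v \in S2 -> S1 = S2.
Proof.
case/andP=> _ /forallP /(_ v) /cards1P [S0 HS0] S1M S2M vS1 vS2.
have : S1 \in [set S in M | v \in S] by rewrite inE S1M vS1.
have : S2 \in [set S in M | v \in S] by rewrite inE S2M vS2.
by rewrite HS0 !inE => /eqP -> /eqP ->.
Qed.

Lemma card_pm M : perfect_matching e M -> #|T| = (#|M|).*2.
Proof.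
move=> pm; have part : partition M [set: T].
  apply/and3P; split.
  - apply/eqP/setP => v; rewrite inE; apply/bigcupP.
    by have [S SM vS] := pm_cover v pm; exists S.
  - apply/trivIsetP => A B AM BM; apply: contraR; rewrite -setI_eq0 => /set0Pn [v].
    by rewrite inE => /andP [vA vB]; rewrite (pm_uniq pm AM BM vA vB).
  - by apply/negP => /(pm_edge pm) [x [y [_ /setP /(_ x)]]]; rewrite !inE eqxx.
rewrite -cardsT (card_partition part) -muln2 -sum_nat_const; apply: eq_bigr => S SM.
have [x [y [exy ->]]] := pm_edge pm SM.
by rewrite cards2; case: eqP exy => // ->; rewrite e_irr.
Qed.

Lemma forcing_number_le M S : forcing_setb e M S -> forcing_number e M <= #|S|.
Proof.
move=> fS; apply: (@bigmin_le_cond _ nat _ #|M| S).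
by rewrite powersetE fS andbT; case/andP: fS.
Qed.

Lemma set2_neq (v z x y : T) : v \notin [set x; y] -> [set v; z] != [set x; y].
Proof. by apply: contraNneq => <-; rewrite set21. Qed.

Definition mate (M : {set {set T}}) (v : T) : T :=
  odflt v [pick w | [set v; w] \in M].

Section Mate.
Variable M : {set {set T}}.
Hypothesis pm : perfect_matching e M.

(* M-edges are genuine pairs, the graph having no loops. *)
Lemma pair_in_neq v w : [set v; w] \in M -> v != w.
Proof.
move=> /(pm_edge pm) [x [y [exy Exy]]]; apply: contraTneq exy => vw; rewrite -vw in Exy.
have /set2P [xv|xv] : x \in [set v; v] by rewrite Exy set21.
all: have /set2P [yv|yv] : y \in [set v; v] by rewrite Exy set22.
all: by rewrite xv yv e_irr.
Qed.

Lemma mate_in v : [set v; mate M v] \in M.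
Proof.
rewrite /mate; case: pickP => [w //|none] /=.
have [S SM vS] := pm_cover v pm; have [x [y [_ Exy]]] := pm_edge pm SM.
move: vS; rewrite Exy => /set2P [vx|vy].
  by move: (none y); rewrite vx -Exy SM.
by move: (none x); rewrite vy setUC -Exy SM.
Qed.

Lemma mate_uniq v w : [set v; w] \in M -> mate M v = w.
Proof.
move=> vwM; have := pm_uniq pm vwM (mate_in v) (set21 v w) (set21 v _).
move=> E; have /set2P [wv|//] : w \in [set v; mate M v] by rewrite -E set22.
by move: (pair_in_neq vwM); rewrite wv eqxx.
Qed.

Lemma mate_neq v : mate M v != v.
Proof. by rewrite eq_sym; apply: pair_in_neq (mate_in v). Qed.

Lemma mate_inv : involutive (mate M).
Proof. by move=> v; apply: mate_uniq; rewrite setUC mate_in. Qed.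

Lemma mate_edge v : e v (mate M v).
Proof.
have [x [y [exy Exy]]] := pm_edge pm (mate_in v).
have /set2P [vx|vy] : v \in [set x; y] by rewrite -Exy set21.
all: have /set2P [mx|my] : mate M v \in [set x; y] by rewrite -Exy set22.
- by move: (mate_neq v); rewrite mx vx eqxx.
- by rewrite my vx.
- by rewrite mx vy e_sym.
- by move: (mate_neq v); rewrite my vy eqxx.
Qed.

Lemma pm_mem S : S \in M -> exists v, S = [set v; mate M v].
Proof.
move=> SM; have [x [y [_ Exy]]] := pm_edge pm SM.
by exists x; rewrite Exy (mate_uniq (w := y)) -?Exy.
Qed.

End Mate.

Lemma pm_eq M N : perfect_matching e M -> perfect_matching e N ->
  mate M =1 mate N -> M = N.
Proof.
move=> pmM pmN EMN; apply/setP => S; apply/idP/idP => SX.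
  by have [v ->] := pm_mem pmM SX; rewrite EMN mate_in.
by have [v ->] := pm_mem pmN SX; rewrite -EMN mate_in.
Qed.

Lemma pm_of_involution (N : {set {set T}}) (f : T -> T) :
  involutive f -> (forall v, e v (f v)) ->
  (forall S, reflect (exists v, S = [set v; f v]) (S \in N)) ->
  perfect_matching e N /\ mate N =1 f.
Proof.
move=> fK ef memN.
have pair_eq x v : v \in [set x; f x] -> [set x; f x] = [set v; f v].
  by case/set2P => ->; rewrite ?fK // setUC.
have pmN : perfect_matching e N.
  apply/andP; split.
    apply/forallP => S; apply/implyP => /memN [v ->].
    by apply/existsP; exists v; apply/existsP; exists (f v); rewrite ef eqxx.
  apply/forallP => v; apply/cards1P; exists [set v; f v].
  apply/setP => S; rewrite !inE; apply/andP/eqP => [[/memN [x ->] /pair_eq] //|->].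
  by split; [apply/memN; exists v | rewrite set21].
by split=> // v; apply: (mate_uniq pmN); apply/memN; exists v.
Qed.

(* [switchable M a c]: with b = mate a and d = mate c, the M-edges {a, b} and
   {c, d} are distinct and b c, d a are edges of the graph, so that a b c d is
   an M-alternating 4-cycle. *)
Definition switchable (M : {set {set T}}) (a c : T) : bool :=
  [&& c != a, c != mate M a, e (mate M a) c & e (mate M c) a].

Definition switched (M : {set {set T}}) (a c : T) : {set {set T}} :=
  ((M :\ [set a; mate M a]) :\ [set c; mate M c]) :|:
    [set [set mate M a; c]; [set mate M c; a]].

Section Switch.
Variables (M : {set {set T}}) (a c : T).
Hypotheses (pm : perfect_matching e M) (sw : switchable M a c).
Local Notation m := (mate M).
Local Notation b := (m a).
Local Notation d := (m c).

Let ca : c != a. Proof. by case/and4P: sw. Qed.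
Let cb : c != b. Proof. by case/and4P: sw. Qed.
Let ebc : e b c. Proof. by case/and4P: sw. Qed.
Let eda : e d a. Proof. by case/and4P: sw. Qed.
Let ab : a != b. Proof. by rewrite eq_sym mate_neq. Qed.
Let cd : c != d. Proof. by rewrite eq_sym mate_neq. Qed.
Let ad : a != d. Proof. by apply: contra cb => /eqP ->; rewrite mate_inv. Qed.
Let bd : b != d.
Proof. by apply: contra ca => /eqP bd; rewrite -(mate_inv pm c) -bd mate_inv. Qed.

(* After the switch, the mate function is m conjugated by the transposition
   (a c): it exchanges the partners of a and c and fixes all other pairs. *)
Let f (v : T) : T := tperm a c (m (tperm a c v)).

Let f_a : f a = d. Proof. by rewrite /f tpermL tpermD. Qed.
Let f_b : f b = c. Proof. by rewrite /f [tperm a c b]tpermD // mate_inv // tpermL. Qed.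
Let f_c : f c = b. Proof. by rewrite /f tpermR tpermD // eq_sym. Qed.
Let f_d : f d = a. Proof. by rewrite /f [tperm a c d]tpermD // mate_inv // tpermR. Qed.
Let f_other v : v != a -> v != b -> v != c -> v != d -> f v = m v.
Proof.
move=> va vb vc vd; rewrite /f [tperm a c v]tpermD 1?eq_sym // tpermD //.
- by apply: contra vb => /eqP ->; rewrite mate_inv.
- by apply: contra vd => /eqP ->; rewrite mate_inv.
Qed.

Let f_inv : involutive f.
Proof. by move=> v; rewrite /f tpermK mate_inv // tpermK. Qed.

Let f_edge v : e v (f v).
Proof.
have [->|va] := eqVneq v a; first by rewrite f_a e_sym.
have [->|vb] := eqVneq v b; first by rewrite f_b.
have [->|vc] := eqVneq v c; first by rewrite f_c e_sym.
have [->|vd] := eqVneq v d; first by rewrite f_d.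
by rewrite f_other // mate_edge.
Qed.

Let switched_mem S : reflect (exists v, S = [set v; f v]) (S \in switched M a c).
Proof.
rewrite !inE; apply: (iffP idP) => [|[v ->]].
  case/or3P => [/and3P [S_cd S_ab /(pm_mem pm) [v Sv]]|/eqP ->|/eqP ->].
  - have off x : S != [set x; m x] -> (v != x) && (v != m x).
      move=> Sx; apply/andP; split; apply: contraNneq Sx => vx.
        by rewrite Sv vx.
      by rewrite Sv vx mate_inv // setUC.
    case/andP: (off a S_ab) => va vb; case/andP: (off c S_cd) => vc vd.
    by exists v; rewrite Sv f_other.
  - by exists b; rewrite f_b.
  - by exists d; rewrite f_d.
have [->|va] := eqVneq v a; first by rewrite f_a setUC eqxx !orbT.
have [->|vb] := eqVneq v b; first by rewrite f_b eqxx orbT.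
have [->|vc] := eqVneq v c; first by rewrite f_c setUC eqxx orbT.
have [->|vd] := eqVneq v d; first by rewrite f_d eqxx !orbT.
by rewrite f_other // mate_in // !set2_neq // !inE negb_or ?va ?vb ?vc ?vd.
Qed.

Lemma switched_pm : perfect_matching e (switched M a c).
Proof. by case: (pm_of_involution f_inv f_edge switched_mem). Qed.

Lemma mate_switched : mate (switched M a c) =1 f.
Proof. by case: (pm_of_involution f_inv f_edge switched_mem). Qed.

Lemma mate_switched_b : mate (switched M a c) b = c.
Proof. by rewrite mate_switched f_b. Qed.

Lemma mate_switched_c : mate (switched M a c) c = b.
Proof. by rewrite mate_switched f_c. Qed.

(* Stated for any v equal to d, so that it applies whatever name d has. *)
Lemma mate_switched_d v : d = v -> mate (switched M a c) v = a.
Proof. by move=> <-; rewrite mate_switched f_d. Qed.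

Lemma mate_switched_other v : v != a -> v != b -> v != c -> v != d ->
  mate (switched M a c) v = m v.
Proof. by move=> *; rewrite mate_switched f_other. Qed.

Lemma two_switch_switched : two_switch e M (switched M a c).
Proof.
exists a, b, c, d; split=> //.
- by rewrite /= !inE !negb_or ab ad bd eq_sym ca eq_sym cb cd.
- by rewrite mate_edge // ebc mate_edge.
- by rewrite !mate_in.
- apply/andP; split; apply/negP => /(mate_uniq pm); rewrite mate_inv //.
    by move=> ba; move: ca; rewrite ba eqxx.
  by move=> dc; move: ca; rewrite dc eqxx.
Qed.

End Switch.

Section Target.
Variable Ms : {set {set T}}.
Hypothesis pmS : perfect_matching e Ms.
Local Notation s := (mate Ms).

Definition alt_square (u v : T) : bool :=
  (e u v && e (s u) (s v)) || (e u (s v) && e (s u) v).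

Definition Ms_without (u v : T) : {set {set T}} :=
  (Ms :\ [set u; s u]) :\ [set v; s v].

Lemma Ms_withoutC u v : Ms_without u v = Ms_without v u.
Proof. by rewrite /Ms_without !setDDl setUC. Qed.

Lemma Ms_without_mate u v : Ms_without u (s v) = Ms_without u v.
Proof. by rewrite /Ms_without mate_inv // (setUC [set s v]). Qed.

Lemma alt_squareC u v : alt_square u v = alt_square v u.
Proof.
rewrite /alt_square (e_sym u v) (e_sym (s u) (s v)) (e_sym u (s v)) (e_sym (s u) v).
by rewrite [e (s v) u && _]andbC.
Qed.

Lemma alt_square_mate u v : alt_square u (s v) = alt_square u v.
Proof. by rewrite /alt_square mate_inv // orbC. Qed.

Lemma s_eq p q : (s p == q) = (p == s q).
Proof. by rewrite -(inj_eq (can_inj (mate_inv pmS))) mate_inv. Qed.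

Section TwoEdges.
Variables (u v : T) (M' : {set {set T}}).
Hypotheses (pm' : perfect_matching e M') (sub : Ms_without u v \subset M').
Local Notation Q := [set u; s u; v; s v].

Lemma mate_outside w : w \notin Q -> mate M' w = s w.
Proof.
rewrite !inE !negb_or -!andbA => /and4P [wu wsu wv wsv].
apply: (mate_uniq pm'); apply: (subsetP sub).
by rewrite !inE mate_in // andbT !set2_neq // !inE negb_or ?wu ?wsu ?wv ?wsv.
Qed.

Lemma mate_inside w : w \in Q -> mate M' w \in Q.
Proof.
apply: contraLR => outside; rewrite -(mate_inv pm' w) (mate_outside outside).
by move: outside; rewrite !inE !s_eq !mate_inv // -!orbA; do !case: (_ == _).
Qed.

End TwoEdges.

Lemma forced_not u v M' : v != u -> v != s u -> ~~ alt_square u v ->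
  perfect_matching e M' -> Ms_without u v \subset M' -> mate M' u != v.
Proof.
move=> vu vsu no_alt pm' sub; apply/eqP => Mu.
have := mate_inside pm' sub (w := s u); rewrite !inE eqxx orbT => /(_ isT).
set q := mate M' (s u); have qsu : q != s u := mate_neq pm' (s u).
have qu : q != u by apply: contra vsu => /eqP qu; rewrite -Mu -{1}qu /q mate_inv.
have qv : q != v.
  apply: contraTneq (mate_neq pmS u) => qv.
  by rewrite negbK; apply/eqP/(can_inj (mate_inv pm')); rewrite Mu -qv.
rewrite (negbTE qu) (negbTE qsu) (negbTE qv) /= => /eqP qsv.
by move: no_alt; rewrite /alt_square -qsv -Mu !(mate_edge pm').
Qed.

Lemma forced_mate u v M' : v != u -> v != s u -> ~~ alt_square u v ->
  perfect_matching e M' -> Ms_without u v \subset M' -> mate M' u = s u.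
Proof.
move=> vu vsu no_alt pm' sub.
have sv_u : s v != u by rewrite s_eq.
have sv_su : s v != s u by rewrite (inj_eq (can_inj (mate_inv pmS))).
have := mate_inside pm' sub (w := u); rewrite !inE eqxx => /(_ isT).
rewrite (negbTE (mate_neq pm' u)) (negbTE (forced_not vu vsu no_alt pm' sub)).
have not_sv : mate M' u != s v.
  by apply: forced_not; rewrite ?alt_square_mate ?Ms_without_mate.
rewrite (negbTE not_sv).
by rewrite !orbF => /eqP.
Qed.

(* Step 1: if f(G, Ms) = n - 1 on 2n vertices, any two edges of Ms span an
   Ms-alternating 4-cycle; otherwise Ms_without u v would force Ms. *)
Lemma alt_square_of_forcing n : #|T| = n.*2 -> forcing_number e Ms = n.-1 ->
  forall u v, v != u -> v != s u -> alt_square u v.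
Proof.
move=> hT hf u v vu vsu; apply/negPn/negP => no_alt.
have uv : u != v by rewrite eq_sym.
have usv : u != s v by rewrite -s_eq eq_sym.
have no_alt' : ~~ alt_square v u by rewrite alt_squareC.
have forcing : forcing_setb e Ms (Ms_without u v).
  apply/andP; split; first by apply/subsetP => S; rewrite !inE => /and3P [].
  apply/forallP => M'; apply/implyP => /andP [pm' sub]; apply/eqP.
  have sub' : Ms_without v u \subset M' by rewrite -Ms_withoutC.
  have Fu := forced_mate vu vsu no_alt pm' sub.
  have Fv := forced_mate uv usv no_alt' pm' sub'.
  apply: (pm_eq pm' pmS) => w.
  have [|/(mate_outside pm' sub)//] := boolP (w \in [set u; s u; v; s v]).
  rewrite !inE -!orbA => /or4P [] /eqP ->; rewrite ?Fu ?Fv //.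
    by rewrite -{1}Fu !mate_inv.
  by rewrite -{1}Fv !mate_inv.
have size_Ms : #|Ms| = n by apply: double_inj; rewrite -card_pm.
have card_without : #|Ms| = #|Ms_without u v|.+2.
  rewrite (cardsD1 [set u; s u]) mate_in // (cardsD1 [set v; s v]) !inE mate_in //.
  by rewrite set2_neq // !inE negb_or vu vsu.
by have := forcing_number_le forcing; rewrite hf -size_Ms card_without ltnn.
Qed.

Definition agree (M : {set {set T}}) : {set T} := [set v | mate M v == s v].

Definition progress (M : {set {set T}}) : Prop :=
  exists2 M', perfect_matching e M' & reaches M M' /\ agree M \proper agree M'.

Lemma agree_mate M v : perfect_matching e M -> mate M v = s v ->
  mate M (mate M v) = s (mate M v).
Proof. by move=> pm Ev; rewrite mate_inv // {1}Ev mate_inv. Qed.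

Lemma agree_switched M a c : perfect_matching e M -> switchable M a c ->
  mate M a != s a -> mate M c != s c -> agree M \subset agree (switched M a c).
Proof.
move=> pm sw na nc; apply/subsetP => v; rewrite !inE => /eqP Ev.
have Emv := agree_mate pm Ev; rewrite mate_switched_other // ?Ev //.
- by apply: contraNneq na => <-; rewrite Ev.
- by apply: contraNneq na => va; rewrite -[a](mate_inv pm) -va Emv.
- by apply: contraNneq nc => <-; rewrite Ev.
- by apply: contraNneq nc => vc; rewrite -[c](mate_inv pm) -vc Emv.
Qed.

Lemma progress_after_switch M a c : perfect_matching e M -> switchable M a c ->
  mate M a != s a -> mate M c != s c -> progress (switched M a c) -> progress M.
Proof.
move=> pm sw na nc [M' pm' [reach' sub']]; exists M' => //; split.
  exact: rt_trans (rt_step _ _ _ _ (two_switch_switched pm sw)) reach'.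
exact: sub_proper_trans (agree_switched pm sw na nc) sub'.
Qed.

(* The basic improving 2-switch: if c = s (mate a) differs from a and
   mate c is adjacent to a, switching a b c d makes b = mate a agree. *)
Lemma progress_improve M a : perfect_matching e M ->
  s (mate M a) != a -> e (mate M (s (mate M a))) a -> progress M.
Proof.
move=> pm ca eda; set b := mate M a in ca eda *; set c := s b in ca eda *.
have sw : switchable M a c by rewrite /switchable ca mate_neq // mate_edge.
have na : b != s a by apply: contra ca => /eqP ba; rewrite /c ba mate_inv.
have nc : mate M c != s c.
  have bc : b = s c by rewrite /c mate_inv.
  by apply: contra ca => /eqP mc; rewrite -[a](mate_inv pm) -/b bc -mc mate_inv.
exists (switched M a c); first exact: switched_pm.
split; first exact/rt_step/two_switch_switched.
apply/properP; split; first exact: agree_switched.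
by exists b; rewrite !inE ?mate_switched_b // mate_inv // eq_sym.
Qed.

Section AlternatingCycle.
Hypothesis alt : forall u v, v != u -> v != s u -> alt_square u v.
Variable M : {set {set T}}.
Hypothesis pm : perfect_matching e M.
Local Notation m := (mate M).

(* The M/Ms-alternating cycle through y0 is y0 x1 y1 x2 y2 ..., with Ms-edges
   {x_i, y_i} and M-edges {y_i, x_(i+1)}: y_(i+1) = s (m y_i), x_i = s y_i. *)
Definition cycle_y (y0 : T) (i : nat) : T := iter i (fun z => s (m z)) y0.
Definition cycle_x (y0 : T) (i : nat) : T := s (cycle_y y0 i).

Section Moves.
Variable y0 : T.
Local Notation y := (cycle_y y0).
Local Notation x := (cycle_x y0).

Lemma mate_y i : m (y i) = x i.+1.
Proof. by rewrite /cycle_x /cycle_y iterS mate_inv. Qed.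

Lemma mate_x i : m (x i.+1) = y i.
Proof. by rewrite -mate_y mate_inv. Qed.

Lemma s_x i : s (x i) = y i.
Proof. exact: mate_inv. Qed.

Lemma edge_xy i : e (x i) (y i).
Proof. by rewrite e_sym mate_edge. Qed.

Lemma x_eq i j : (x i == x j) = (y i == y j).
Proof. exact: (inj_eq (can_inj (mate_inv pmS))). Qed.

Lemma y_neq_x_from d : forall i, (y i != x (i + d)) && (y i != x (i + d.+1)).
Proof.
elim: d => [|d IHd] i.
  by rewrite addn0 addn1 -mate_y eq_sym mate_neq // eq_sym mate_neq.
case/andP: (IHd i) => _ -> /=; case/andP: (IHd i.+1) => + _; apply: contra.
rewrite addnS => /eqP E; apply/eqP.
by rewrite [LHS]/cycle_y iterS -/(cycle_y y0 i) E mate_x addSn -addnS.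
Qed.

Lemma y_neq_x i j : y i != x j.
Proof.
have [ij|ji] := leqP i j.
  by rewrite -(subnKC ij); case/andP: (y_neq_x_from (j - i) i).
rewrite -(inj_eq (can_inj (mate_inv pmS))) s_x -/(cycle_x y0 i) eq_sym.
by rewrite -(subnKC (ltnW ji)); case/andP: (y_neq_x_from (i - j) j).
Qed.

(* Walking along the cycle is injective: if d steps move y0, they move every y_i. *)
Lemma y_shift_neq i d : y d != y 0 -> y (d + i) != y i.
Proof.
have step_inj : injective (fun z => s (m z)).
  exact: inj_comp (can_inj (mate_inv pmS)) (can_inj (mate_inv pm)).
move=> D; elim: i => [|i]; first by rewrite addn0.
apply: contra => /eqP E.
by apply/eqP/step_inj; rewrite addnS in E.
Qed.

Lemma cycle_par i j : y j != y i -> ~~ e (y i) (x j) -> e (y i) (y j) && e (x i) (x j).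
Proof. by move=> D; case/orP: (alt D (y_neq_x j i)) => // /andP [->]. Qed.

Lemma cycle_cross i j :
  y j != y i -> ~~ (e (y i) (y j) && e (x i) (x j)) -> e (x i) (y j).
Proof. by move=> D; case/orP: (alt D (y_neq_x j i)) => [->|/andP [_ ->]]. Qed.

(* Move A: a chord x_2 y_0 closes the M-alternating 4-cycle y0 x1 y1 x2, and
   switching it makes the Ms-edge {x1, y1} agree. *)
Lemma move_chord : y 1 != y 0 -> e (x 2) (y 0) -> progress M.
Proof.
by move=> D1 c20; apply: (progress_improve pm (a := y 0)); rewrite mate_y s_x // mate_y.
Qed.

(* Switching the M-edges {x1, y0} and {y_(j+1), x_(j+2)} along the chords
   y0 y_(j+1) and x_(j+2) x1 keeps all agreements with Ms. *)
Lemma switchable_par j : y j.+1 != y 0 -> e (y 0) (y j.+1) -> e (x j.+2) (x 1) ->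
  switchable M (x 1) (y j.+1).
Proof. by move=> Dj1 c0 c1; rewrite /switchable y_neq_x mate_x Dj1 c0 mate_y. Qed.

Lemma progress_par_switch j (Dj1 : y j.+1 != y 0)
    (c0 : e (y 0) (y j.+1)) (c1 : e (x j.+2) (x 1)) :
  y 1 != y 0 -> progress (switched M (x 1) (y j.+1)) -> progress M.
Proof.
move=> D1; apply: (progress_after_switch pm (switchable_par Dj1 c0 c1)).
  by rewrite mate_x s_x eq_sym.
by rewrite mate_y x_eq (y_shift_neq j.+1 D1).
Qed.

(* Move B: after the parallel switch, the chord y0 y_j closes the 4-cycle
   y_j x_(j+1) y_(j+1) y0, whose switch makes {x_(j+1), y_(j+1)} agree. *)
Lemma move_par_y j : y 1 != y 0 -> y j != y 0 -> y j.+1 != y 0 ->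
  e (y 0) (y j.+1) -> e (x j.+2) (x 1) -> e (y 0) (y j) -> progress M.
Proof.
move=> D1 Dj Dj1 c0 c1 c2; have sw := switchable_par Dj1 c0 c1.
apply: (progress_par_switch Dj1 c0 c1 D1).
have Djj : y j.+1 != y j := y_shift_neq j D1.
have mj : mate (switched M (x 1) (y j.+1)) (y j) = x j.+1.
  by rewrite (mate_switched_other pm sw) ?mate_x ?mate_y ?y_neq_x // eq_sym.
apply: (progress_improve (switched_pm pm sw) (a := y j)); rewrite mj s_x //.
by rewrite (mate_switched_c pm sw) mate_x.
Qed.

(* Move B': after the same switch with j = 1, the chord x2 x3 closes the
   4-cycle x3 x1 y1 x2, whose switch makes {x1, y1} agree. *)
Lemma move_par_x : y 1 != y 0 -> y 2 != y 0 ->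
  e (y 0) (y 2) -> e (x 3) (x 1) -> e (x 2) (x 3) -> progress M.
Proof.
move=> D1 D2 c0 c1 c2; have sw := switchable_par D2 c0 c1.
apply: (progress_par_switch D2 c0 c1 D1).
have D21 : y 2 != y 1 := y_shift_neq 1 D1.
have m3 : mate (switched M (x 1) (y 2)) (x 3) = x 1.
  by rewrite (mate_switched_d pm sw) ?mate_y.
have m1 : mate (switched M (x 1) (y 2)) (y 1) = x 2.
  by rewrite (mate_switched_other pm sw) ?mate_x ?mate_y ?y_neq_x // eq_sym.
apply: (progress_improve (switched_pm pm sw) (a := x 3)); rewrite m3 s_x ?m1 //.
exact: y_neq_x.
Qed.

(* Move C: switching the M-edges {x1, y0} and {x3, y2} along the chords y0 x3
   and y2 x1 creates the 4-cycle y2 x1 y1 x2, whose switch makes {x1, y1} agree. *)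
Lemma move_cross : y 1 != y 0 -> y 2 != y 0 ->
  e (y 0) (x 3) -> e (y 2) (x 1) -> progress M.
Proof.
move=> D1 D2 c0 c1.
have D21 : y 2 != y 1 := y_shift_neq 1 D1.
have sw : switchable M (x 1) (x 3).
  by rewrite /switchable x_eq (y_shift_neq 1 D2) mate_x eq_sym y_neq_x c0 mate_x.
apply: (progress_after_switch pm sw); rewrite ?mate_x ?s_x 1?eq_sym //.
  exact (y_shift_neq 2 D1).
have m2 : mate (switched M (x 1) (x 3)) (y 2) = x 1.
  by rewrite (mate_switched_d pm sw) ?mate_x.
have m1 : mate (switched M (x 1) (x 3)) (y 1) = x 2.
  by rewrite (mate_switched_other pm sw) ?mate_x ?mate_y ?y_neq_x // eq_sym.
apply: (progress_improve (switched_pm pm sw) (a := y 2)); rewrite m2 s_x ?m1 1?eq_sym //.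
exact: edge_xy.
Qed.

End Moves.

Section CaseAnalysis.
Variable y0 : T.
Local Notation y := (cycle_y y0).
Local Notation x := (cycle_x y0).

Lemma progress_from : m y0 != s y0 -> progress M.
Proof.
move=> bad; have D1 : y 1 != y 0.
  by apply: contra bad; rewrite /cycle_y /= => /eqP E; rewrite -[m y0](mate_inv pmS) E.
(* A 4-cycle is closed by its own Ms-edge {x2, y0} = {x0, y0}. *)
have [E2|D2] := eqVneq (y 2) (y 0).
  by apply: move_chord D1 _; rewrite /cycle_x E2 edge_xy.
have D21 : y 2 != y 1 := y_shift_neq 1 D1.
have D31 : y 3 != y 1 := y_shift_neq 1 D2.
have D32 : y 3 != y 2 := y_shift_neq 2 D1.
have D42 : y 4 != y 2 := y_shift_neq 2 D2.
(* Chords y_i x_(i+2) give move A; otherwise [alt] makes (i, i+2) parallel. *)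
have [c|nA0] := boolP (e (y 0) (x 2)); first by apply: move_chord D1 _; rewrite e_sym.
have [c|nA1] := boolP (e (y 1) (x 3)).
  by apply: (move_chord (y0 := y 1) D21); rewrite e_sym.
have /andP [p02 _] := cycle_par D2 nA0.
have /andP [p13 p13'] := cycle_par D31 nA1.
(* A consecutive parallel pair gives move B or B'. *)
have [c|nB0] := boolP (e (y 0) (y 1)).
  by apply: (move_par_y (j := 1) D1 D1 D2 p02 _ c); rewrite e_sym.
have [c|nB0'] := boolP (e (x 2) (x 3)).
  by apply: (move_par_x D1 D2 p02 _ c); rewrite e_sym.
have [c|nA2] := boolP (e (y 2) (x 4)).
  by apply: (move_chord (y0 := y 2) D32); rewrite e_sym.
have /andP [_ p24'] := cycle_par D42 nA2.
have [c|nB1] := boolP (e (y 1) (y 2)).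
  by apply: (move_par_y (y0 := y 1) (j := 1) D21 D21 D31 p13 _ c); rewrite e_sym.
(* Otherwise consecutive pairs cross, which also excludes a 6-cycle. *)
have c01 : e (x 0) (y 1) by apply: cycle_cross => //; rewrite (negbTE nB0).
have c12 : e (x 1) (y 2) by apply: cycle_cross => //; rewrite (negbTE nB1).
have c23 : e (x 2) (y 3) by apply: cycle_cross => //; rewrite (negbTE nB0') andbF.
have D3 : y 3 != y 0.
  by apply: contra nA1 => /eqP E3; rewrite /cycle_x E3 e_sym.
have D41 : y 4 != y 1 := y_shift_neq 1 D3.
(* Chords y_i x_(i+3) give move C; otherwise (0, 3) and (1, 4) are parallel
   and move B with j = 2 applies. *)
have [c|nC0] := boolP (e (y 0) (x 3)).
  by apply: (move_cross D1 D2 c); rewrite e_sym.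
have /andP [p03 _] := cycle_par D3 nC0.
have [c|nC1] := boolP (e (y 1) (x 4)).
  by apply: (move_cross (y0 := y 1) D21 D31 c); rewrite e_sym.
have /andP [_ p14'] := cycle_par D41 nC1.
by apply: (move_par_y (j := 2) D1 D2 D3 p03 _ p02); rewrite e_sym.
Qed.

End CaseAnalysis.

End AlternatingCycle.

Lemma reaches_target (alt : forall u v, v != u -> v != s u -> alt_square u v) M :
  perfect_matching e M -> reaches M Ms.
Proof.
move=> pmM; have [k] := ubnP #|~: agree M|; elim: k M pmM => // k IHk M pmM.
rewrite ltnS => le_k.
have [v bad|all_agree] := pickP (fun v => mate M v != s v); last first.
  rewrite (pm_eq pmM pmS) => [|v]; first exact: rt_refl.
  exact/eqP/negbFE/all_agree.
have [M' pmM' [reachM' more]] := progress_from alt pmM bad.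
apply: rt_trans reachM' (IHk M' pmM' _).
by apply: leq_trans le_k; apply: proper_card; rewrite properC.
Qed.

End Target.
End Graph.

Unset Implicit Arguments.

Theorem mainTheorem11 (n : nat) (T : finType) (e : rel T)
    (e_sym : symmetric e) (e_irr : irreflexive e)
    (hn : 1 <= n) (hT : #|T| = n.*2)
    (Ms : {set {set T}}) (hMs : perfect_matching e Ms)
    (hf : forcing_number e Ms = n.-1) :
  forall M : {set {set T}}, perfect_matching e M ->
    clos_refl_trans _ (two_switch e) M Ms.
Proof.
move=> M pmM; apply: (reaches_target e_sym e_irr hMs _ pmM) => u v.
exact: (alt_square_of_forcing e_sym e_irr hMs hT hf).
Qed.
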